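(* Let $\mathcal{H}$ be a finite set of hypotheses, $\mathcal{R}$ a finite collection of decision regions $r\subseteq\mathcal{H}$, and $\mathcal{G}$ the set of subregions. Let $k_{\mathrm{as}}=m+1$, where $m$ is the largest cardinality of a set $R\subseteq\mathcal{R}$ such that (1) some hypothesis $\tilde h$ lies in every region of $R$, and (2) for every $r\in R$ there is a hypothesis $h$ with $h\notin r$ and $h\in r'$ for all $r'\in R\setminus\{r\}$. Then $\max_{r\in\mathcal{R}}|\{g\in\mathcal{G}: g\subseteq r\}|+1\ge k_{\mathrm{as}}$.
   Context: Subregions: hypotheses are grouped into the same subregion iff they belong to exactly the same decision regions; $\mathcal{G}$ is the set of these classes, and $g\subseteq r$ means every hypothesis of $g$ lies in $r$. *)

From mathcomp Require Import all_boot.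
Set Implicit Arguments. Unset Strict Implicit. Unset Printing Implicit Defensive.

Section Regions.
Variable H : finType.
Variable Rs : {set {set H}}.

Definition region_sig (h : H) : {set {set H}} := [set r in Rs | h \in r].

Definition subregion_of (h : H) : {set H} :=
  [set h' | region_sig h' == region_sig h].

Definition subregions : {set {set H}} := [set subregion_of h | h : H].

Definition n_sub (r : {set H}) : nat := #|[set g in subregions | g \subset r]|.

Definition as_family (R : {set {set H}}) : bool :=
  [&& R \subset Rs,
      [exists ht : H, [forall r in R, ht \in r]] &
      [forall r in R, exists h : H,
          (h \notin r) && [forall r' in R :\ r, h \in r']]].

Definition k_as : nat :=
  (\max_(R : {set {set H}} | as_family R) #|R|).+1.

End Regions.

From mathcomp Require Import all_boot.

(* Let R satisfy (1) and (2) and pick r0 in R. A hypothesis lying in every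
   region of R (standing for r0), together with, for each other r in R, a
   hypothesis outside r but in all the other regions of R, gives #|R|
   hypotheses inside r0 whose region signatures are pairwise distinct. Their
   subregions are then #|R| distinct subregions contained in r0. *)

Set Implicit Arguments.
Unset Strict Implicit.
Unset Printing Implicit Defensive.

Section Subregions.
Variables (H : finType) (Rs : {set {set H}}).

Lemma subregion_sub r h : r \in Rs -> h \in r -> subregion_of Rs h \subset r.
Proof.
move=> rRs hr; apply/subsetP=> x; rewrite inE => /eqP sig_x.
have : r \in region_sig Rs h by rewrite inE rRs hr.
by rewrite -sig_x inE => /andP[].
Qed.

Lemma eq_subregion_sig x y :
  subregion_of Rs x = subregion_of Rs y -> region_sig Rs x = region_sig Rs y.
Proof.
move=> eq_xy; have : x \in subregion_of Rs x by rewrite inE.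
by rewrite eq_xy inE => /eqP.
Qed.

Lemma region_sig_separated r x y :
  r \in Rs -> x \in r -> y \notin r -> region_sig Rs x != region_sig Rs y.
Proof.
move=> rRs xr yNr; apply/negP=> /eqP sig_xy.
have : r \in region_sig Rs y by rewrite -sig_xy inE rRs xr.
by rewrite inE (negbTE yNr) andbF.
Qed.

Lemma leq_card_n_sub (I : finType) (A : {set I}) (w : I -> H) r0 :
    r0 \in Rs -> {in A, forall i, w i \in r0} ->
    {in A &, forall i j, region_sig Rs (w i) = region_sig Rs (w j) -> i = j} ->
  #|A| <= n_sub Rs r0.
Proof.
move=> r0Rs w_r0 w_sig_inj.
have sub_inj : {in A &, injective (fun i => subregion_of Rs (w i))}.
  by move=> i j iA jA /eq_subregion_sig; apply: w_sig_inj.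
rewrite -(card_in_imset sub_inj); apply: subset_leq_card.
apply/subsetP=> _ /imsetP[i iA ->]; rewrite inE imset_f //=.
exact: subregion_sub (w_r0 i iA).
Qed.

Lemma as_family_witnesses R r0 : as_family Rs R -> r0 \in R ->
  exists w : {set H} -> H, [/\ w r0 \in r0,
    {in R &, forall r r', r' != r -> w r \in r'} &
    {in R, forall r, r != r0 -> w r \notin r}].
Proof.
case/and3P=> _ /existsP[ht /forallP ht_all] /forallP separating r0R.
pose sep (r : {set H}) (h : H) := (h \notin r) && [forall r' in R :\ r, h \in r'].
have sep_pick r : r \in R -> sep r (odflt ht [pick h | sep r h]).
  move=> rR; case: pickP => //= none.
  have /existsP[h sep_h] := implyP (separating r) rR.
  by have := none h; rewrite /sep sep_h.
exists (fun r => if r == r0 then ht else odflt ht [pick h | sep r h]).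
split.
- by rewrite eqxx (implyP (ht_all r0)).
- move=> r r' rR r'R r'Nr; case: ifP => _; first exact: implyP (ht_all r') r'R.
  case/andP: (sep_pick r rR) => _ /forallP/(_ r')/implyP; apply.
  by rewrite !inE r'Nr r'R.
- move=> r rR rNr0; rewrite (negbTE rNr0).
  by case/andP: (sep_pick r rR).
Qed.

Lemma witness_sig_inj (R : {set {set H}}) (r0 : {set H}) (w : {set H} -> H) :
    R \subset Rs ->
    {in R &, forall r r', r' != r -> w r \in r'} ->
    {in R, forall r, r != r0 -> w r \notin r} ->
  {in R &, forall r r', region_sig Rs (w r) = region_sig Rs (w r') -> r = r'}.
Proof.
move=> sRRs w_in w_out.
have sep (r r' : {set H}) : r \in R -> r' \in R -> r != r' -> r != r0 ->
    region_sig Rs (w r') != region_sig Rs (w r).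
  move=> rR r'R rNr' rNr0.
  apply: region_sig_separated (subsetP sRRs r rR) _ (w_out r rR rNr0).
  exact: w_in r' r r'R rR rNr'.
move=> r r' rR r'R sig_eq; apply/eqP; apply: contraT => rNr'.
have [r_r0 | rNr0] := eqVneq r r0.
- have r'Nr0 : r' != r0 by rewrite -r_r0 eq_sym.
  have r'Nr : r' != r by rewrite eq_sym.
  by have := sep r' r r'R rR r'Nr r'Nr0; rewrite sig_eq eqxx.
- by have := sep r r' rR r'R rNr' rNr0; rewrite sig_eq eqxx.
Qed.

End Subregions.

Theorem proposition4 (H : finType) (Rs : {set {set H}}) :
  k_as Rs <= (\max_(r in Rs) n_sub Rs r).+1.
Proof.
rewrite /k_as ltnS; apply/bigmax_leqP => R famR.
have [-> | [r0 r0R]] := set_0Vmem R; first by rewrite cards0.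
have sRRs : R \subset Rs by case/and3P: famR.
have r0Rs : r0 \in Rs := subsetP sRRs r0 r0R.
have [w [w_r0 w_in w_out]] := as_family_witnesses famR r0R.
apply: leq_trans (leq_bigmax_cond _ r0Rs).
apply: leq_card_n_sub (witness_sig_inj sRRs w_in w_out) => // r rR.
have [-> // | rNr0] := eqVneq r r0.
by apply: w_in; rewrite // eq_sym.
Qed.
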